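(* For all $n\in\mathbb N$, \[ L^n(J)-L_0^n(J)=\sum_{j=0}^{n-1}L^j(\eta_{n-j}),\qquad\text{where }\eta_n:=L\big(L_0^{n-1}(J)\big)-L_0^n(J), \] and $\eta_n$ satisfies \[ \eta_n=\sum_{s=0}^\infty\alpha(n-1,s)\Big[\frac1N\mathrm{diag}(Q^s)+\mathrm{diag}\big(Q\,\mathrm{diag}(Q^s)J\big)-\frac{2\,\mathrm{tr}(Q^s)}{N^2}I-\frac1N\mathrm{diag}(Q^s)Q-\frac1NQ\,\mathrm{diag}(Q^s)+\frac{2\,\mathrm{tr}(Q^s)}{N^2}Q\Big]. \]
   Context: $E$ is a finite set with $N=\#E>8$ elements, listed in a fixed order; $\mathsf M_E$ is the space of complex $N\times N$ matrices indexed by $E\times E$; $|x\rangle,\langle x|$ are standard unit column/row vectors, $C^*$ is transpose. $Q$ is an irreducible stochastic matrix on $E$ with $Q(x,y)=Q(y,x)$ for all $x,y$ and $\mathrm{tr}(Q)=0$. $I$ is the identity, $J$ the matrix with all entries $1/N$, $\mathrm{diag}(C)=\sum_x|x\rangle\langle x|C|x\rangle\langle x|$. Let $(U,V)$ be random with $\mathbb P(U=x,V=y)=\frac1NQ(x,y)$, $T=I-|U\rangle\langle U|+|U\rangle\langle V|$, and $L(C)=\mathbb E[T^*CT]$. $L_0(C)=\frac{N-2}NC+\frac1N(CQ+QC)-\frac{2\,\mathrm{tr}(C)}{N^2}Q+\frac{2\,\mathrm{tr}(C)}{N^2}I$. Powers of $L$, $L_0$ are compositions ($L^0=L_0^0=$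 identity). The function $\alpha:\mathbb Z_+\times\mathbb Z_+\to\mathbb R$ is defined by $\alpha(0,s)=0$ and, for $n\in\mathbb Z_+$, $\alpha(n+1,0)=\frac2{N^2}+\alpha(n,0)+\frac2{N^2}\sum_{s\ge1}\alpha(n,s)\mathrm{tr}(Q^s)$, $\alpha(n+1,1)=-\frac2{N^2}+\frac{N-2}N\alpha(n,1)-\frac2{N^2}\sum_{s\ge1}\alpha(n,s)\mathrm{tr}(Q^s)$, $\alpha(n+1,s)=\frac{N-2}N\alpha(n,s)+\frac2N\alpha(n,s-1)$ for $s\ge2$ (so $\alpha(n,s)=0$ for $s\ge n+1$). *)

(* Complex scalars: an arbitrary numClosedFieldType R
   (the library's abstraction of the complex numbers). E = 'I_N. *)
From HB Require Import structures.
From mathcomp Require Import all_boot all_order all_algebra.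
Set Implicit Arguments. Unset Strict Implicit. Unset Printing Implicit Defensive.
Import Order.TTheory GRing.Theory Num.Theory.
Local Open Scope ring_scope.

Section Defs.
Variable R : fieldType.
Variable N : nat.
Implicit Types (Q C : 'M[R]_N).

Definition mdiag C : 'M[R]_N := \matrix_(i, j) ((i == j)%:R * C i j).

Definition Jm : 'M[R]_N := const_mx (N%:R)^-1.

(* T = I - |x><x| + |x><y| for the outcome (U,V) = (x,y) *)
Definition Tm (x y : 'I_N) : 'M[R]_N := 1%:M - delta_mx x x + delta_mx x y.

(* L(C) = E[T^* C T] with P(U=x,V=y) = Q(x,y)/N ; T^* = transpose *)
Definition Lop Q C : 'M[R]_N :=
  \sum_(x < N) \sum_(y < N) ((N%:R)^-1 * Q x y) *: ((Tm x y)^T *m C *m Tm x y).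

Definition L0op Q C : 'M[R]_N :=
  ((N%:R - 2) / N%:R) *: C + (N%:R)^-1 *: (C *m Q + Q *m C)
  - (2 * \tr C / N%:R ^+ 2) *: Q + (2 * \tr C / N%:R ^+ 2) *: 1%:M.

(* eta_n := L(L_0^{n-1}(J)) - L_0^n(J)  (meaningful for n >= 1) *)
Definition etan Q (n : nat) : 'M[R]_N :=
  Lop Q (iter n.-1 (L0op Q) Jm) - iter n (L0op Q) Jm.

(* alpha(n, s).  The sums sum_{s>=1} alpha(n,s) tr(Q^s) are taken over
   1 <= s <= n, which contains every possibly nonzero term, since
   alpha(n,s) = 0 for s >= n+1 (by induction from the recursion). *)
Fixpoint alpha Q (n : nat) : nat -> R :=
  match n with
  | 0 => fun _ => 0
  | n'.+1 =>
      let a := alpha Q n' in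
      let S := \sum_(1 <= s < n'.+1) a s * \tr (Q ^+ s) in
      fun s => match s with
        | 0 => 2 / N%:R ^+ 2 + a 0%N + 2 / N%:R ^+ 2 * S
        | 1 => - (2 / N%:R ^+ 2) + (N%:R - 2) / N%:R * a 1%N - 2 / N%:R ^+ 2 * S
        | s'.+2 => (N%:R - 2) / N%:R * a s'.+2 + 2 / N%:R * a s'.+1
        end
  end.

End Defs.

Definition stochastic (R : numFieldType) (N : nat) (Q : 'M[R]_N) : Prop :=
  (forall x y, 0 <= Q x y) /\ (forall x, \sum_(y < N) Q x y = 1).

Definition irreducible_mx (R : numFieldType) (N : nat) (Q : 'M[R]_N) : Prop :=
  forall x y, exists k : nat, 0 < (Q ^+ k) x y.

(* The first identity is a telescoping sum and holds for any additive L.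
   For the second one, write T = I + e_U (e_V - e_U)^T and average T^* C T
   over the law of (U, V); for Q symmetric with unit row sums this shows that
   L - L_0 is the explicit linear map in the bracket of the statement, and that
   it kills J.  Since L_0 maps polynomials in Q to polynomials in Q,
   L_0^k(J) = J + sum_s alpha(k, s) Q^s, the recursion defining alpha being
   the recursion of these coefficients; applying L - L_0 gives eta_(k+1). *)

From HB Require Import structures.
From mathcomp Require Import all_boot all_order all_algebra ring zify.
Import Order.TTheory GRing.Theory Num.Theory.
Set Implicit Arguments. Unset Strict Implicit.
Local Open Scope ring_scope.

Lemma iter_raddfB (V : zmodType) (f : {additive V -> V}) j :
  {morph iter j f : x y / x - y}.
Proof. by elim: j => // j IH x y; rewrite !iterS IH raddfB. Qed.

Lemma iter_subr_telescope (V : zmodType) (f : {additive V -> V}) (g : V -> V) x n :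
  iter n f x - iter n g x
  = \sum_(j < n) iter j f (f (iter (n - j).-1 g x) - iter (n - j) g x).
Proof.
rewrite -(big_mkord xpredT (fun j => iter j f (f (iter (n - j).-1 g x) - iter (n - j) g x))).
rewrite (@telescope_sumr_eq _ 0 n (fun k => iter k f (iter (n - k) g x))) //.
  by rewrite subnn subn0.
by move=> k _; rewrite iter_raddfB -iterSr -subnS.
Qed.

Lemma sumr_delta (R : pzSemiRingType) (I : finType) (i : I) (F : I -> R) :
  \sum_j (i == j)%:R * F j = F i.
Proof.
rewrite (bigD1 i) //= eqxx mul1r big1 ?addr0 // => j ji.
by rewrite eq_sym (negbTE ji) mul0r.
Qed.

Lemma sumr_ord_vanish (V : nmodType) (F : nat -> V) n m :
  (n <= m)%N -> (forall s, (n <= s)%N -> F s = 0) ->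
  \sum_(s < m) F s = \sum_(s < n) F s.
Proof.
move=> lenm F0; rewrite -!(big_mkord xpredT) (big_cat_nat _ lenm) //=.
by rewrite [X in _ + X]big1_seq ?addr0 // => s /andP[_]; rewrite mem_index_iota => /andP[/F0].
Qed.

Section MarkovOperators.

Variables (R : fieldType) (N : nat) (Q : 'M[R]_N).
Local Notation J := (Jm R N).
Local Notation n := (N%:R : R).

Lemma Lop_is_linear : linear (Lop Q).
Proof.
move=> a A B; rewrite /Lop scaler_sumr -big_split; apply: eq_bigr => x _.
rewrite scaler_sumr -big_split; apply: eq_bigr => y _.
by rewrite (mulmxDr _^T) mulmxDl scalerDr -scalemxAr -scalemxAl !scalerA mulrC.
Qed.

HB.instance Definition _ := GRing.isLinear.Build R _ _ _ (Lop Q) Lop_is_linear.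

Lemma L0op_is_linear : linear (L0op Q).
Proof.
move=> a A B; rewrite /L0op mulmxDl mulmxDr mxtraceD mxtraceZ -scalemxAl -scalemxAr.
by apply/matrixP => i j; rewrite !mxE; ring.
Qed.

HB.instance Definition _ := GRing.isLinear.Build R _ _ _ (L0op Q) L0op_is_linear.

Definition Ldiff (C : 'M[R]_N) := Lop Q C - L0op Q C.

Lemma Ldiff_is_linear : linear Ldiff.
Proof.
by move=> a A B; rewrite /Ldiff (linearP (Lop Q)) (linearP (L0op Q)) scalerBr opprD addrACA.
Qed.

HB.instance Definition _ := GRing.isLinear.Build R _ _ _ Ldiff Ldiff_is_linear.

Lemma mdiagE (C : 'M[R]_N) : mdiag C = \matrix_(i, j) ((i == j)%:R * C i i).
Proof. by apply/matrixP => i j; rewrite !mxE; case: eqVneq => [->|_]; rewrite ?mul0r. Qed.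

Lemma mdiag_mulmx (C A : 'M[R]_N) : mdiag C *m A = \matrix_(i, j) (C i i * A i j).
Proof.
apply/matrixP => i j; rewrite !mxE mdiagE.
by under eq_bigr => k _ do rewrite mxE -mulrA; rewrite sumr_delta.
Qed.

Lemma mulmx_mdiag (A C : 'M[R]_N) : A *m mdiag C = \matrix_(i, j) (A i j * C j j).
Proof.
apply/matrixP => i j; rewrite !mxE mdiagE.
by under eq_bigr => k _ do rewrite mxE eq_sym mulrCA; rewrite sumr_delta.
Qed.

Lemma mdiag_mulmx_Jm (A : 'M[R]_N) :
  mdiag (A *m J) = \matrix_(i, j) ((i == j)%:R * (n^-1 * \sum_k A i k)).
Proof.
apply/matrixP => i j; rewrite !mxE; congr (_ * _); rewrite mulr_sumr.
by apply: eq_bigr => k _; rewrite mxE mulrC.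
Qed.

Hypothesis N_neq0 : n != 0.
Hypothesis Q_row1 : forall x, \sum_y Q x y = 1.
Hypothesis Q_sym : forall x y, Q x y = Q y x.

(* [jump x y] is the row vector e_y - e_x, so that Tm x y = I + e_x (e_y - e_x)^T. *)
Definition jump (x y k : 'I_N) : R := (k == y)%:R - (k == x)%:R.

Lemma Tm_entry x y k l : Tm R x y k l = (k == l)%:R + (k == x)%:R * jump x y l.
Proof.
rewrite /Tm /jump !mxE.
by case: (k == x); case: (l == x); case: (l == y); case: (k == l) => /=; ring.
Qed.

Lemma conj_Tm_entry (C : 'M[R]_N) x y i j :
  ((Tm R x y)^T *m C *m Tm R x y) i j =
  C i j + jump x y i * C x j + jump x y j * C i x + jump x y i * jump x y j * C x x.
Proof.
have TC l : ((Tm R x y)^T *m C) i l = C i l + jump x y i * C x l.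
  rewrite mxE (eq_bigr (fun k => (i == k)%:R * C k l + jump x y i * ((x == k)%:R * C k l))).
    by rewrite big_split /= -mulr_sumr !sumr_delta.
  by move=> k _; rewrite mxE Tm_entry eq_sym [k == x]eq_sym; ring.
rewrite mxE (eq_bigr (fun l => (j == l)%:R * (C i l + jump x y i * C x l)
                + jump x y j * ((x == l)%:R * (C i l + jump x y i * C x l)))).
  by rewrite big_split /= -mulr_sumr !sumr_delta; ring.
by move=> l _; rewrite TC Tm_entry eq_sym [l == x]eq_sym; ring.
Qed.

Lemma weights_sum1 : \sum_x \sum_y n^-1 * Q x y = 1.
Proof.
under eq_bigr => x _ do rewrite -mulr_sumr Q_row1 mulr1.
by rewrite sumr_const card_ord -[_ *+ N]mulr_natr mulVf.
Qed.

Lemma mean_jump (f : 'I_N -> R) i :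
  \sum_x \sum_y n^-1 * Q x y * (jump x y i * f x) = n^-1 * (\sum_x Q i x * f x - f i).
Proof.
transitivity (\sum_x n^-1 * (Q i x * f x - (i == x)%:R * f x)).
  apply: eq_bigr => x _.
  rewrite (eq_bigr (fun y => n^-1 * f x * ((i == y)%:R * Q x y)
                            - n^-1 * f x * (i == x)%:R * Q x y)).
    by rewrite sumrB -!mulr_sumr sumr_delta Q_row1 Q_sym; ring.
  by move=> y _; rewrite /jump; ring.
by rewrite -mulr_sumr sumrB sumr_delta.
Qed.

Lemma mean_jump2 (f : 'I_N -> R) i j :
  \sum_x \sum_y n^-1 * Q x y * (jump x y i * jump x y j * f x) =
  n^-1 * ((i == j)%:R * (\sum_x Q i x * f x + f i) - Q i j * (f i + f j)).
Proof.
have kron_mul y : (i == y)%:R * (j == y)%:R = (i == y)%:R * (j == i)%:R :> R.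
  by case: (eqVneq i y) => [->|_]; rewrite ?mul0r.
transitivity (\sum_x n^-1 * ((j == i)%:R * (Q i x * f x) - (j == x)%:R * (Q i x * f x)
                 - (i == x)%:R * (Q x j * f x) + (i == x)%:R * ((j == x)%:R * f x))).
  apply: eq_bigr => x _.
  rewrite (eq_bigr (fun y => n^-1 * f x * ((j == i)%:R * ((i == y)%:R * Q x y)
      - (j == x)%:R * ((i == y)%:R * Q x y) - (i == x)%:R * ((j == y)%:R * Q x y)
      + (i == x)%:R * (j == x)%:R * Q x y))).
    rewrite -mulr_sumr !big_split /= !sumrN -!mulr_sumr !sumr_delta Q_row1 (Q_sym x i).
    by ring.
  by move=> y _; rewrite /jump mulrBl !mulrBr (kron_mul y); ring.
by rewrite -mulr_sumr !big_split /= !sumrN -!mulr_sumr !sumr_delta Q_sym [j == i]eq_sym; ring.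
Qed.

Lemma Lop_entry (C : 'M[R]_N) i j :
  Lop Q C i j = C i j + n^-1 * ((Q *m C) i j - C i j) + n^-1 * ((C *m Q) i j - C i j)
    + n^-1 * ((i == j)%:R * (\sum_x Q i x * C x x + C i i) - Q i j * (C i i + C j j)).
Proof.
rewrite /Lop summxE.
transitivity (\sum_x \sum_y (n^-1 * Q x y * C i j
    + n^-1 * Q x y * (jump x y i * C x j) + n^-1 * Q x y * (jump x y j * C i x)
    + n^-1 * Q x y * (jump x y i * jump x y j * C x x))).
  apply: eq_bigr => x _; rewrite summxE; apply: eq_bigr => y _.
  by rewrite mxE conj_Tm_entry; ring.
under eq_bigr => x _ do rewrite !big_split /=.
have CQ : (C *m Q) i j = \sum_x Q j x * C i x.
  by rewrite mxE; apply: eq_bigr => x _; rewrite mulrC Q_sym.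
rewrite !big_split /= (mean_jump (fun x => C x j)) (mean_jump (C i)).
have -> : \sum_x \sum_y n^-1 * Q x y * C i j = C i j.
  rewrite -[RHS]mul1r -[in RHS]weights_sum1 mulr_suml.
  by apply: eq_bigr => x _; rewrite mulr_suml.
by rewrite (mean_jump2 (fun x => C x x)) CQ mxE.
Qed.

Lemma LdiffE (C : 'M[R]_N) :
  Ldiff C = n^-1 *: mdiag C + mdiag (Q *m mdiag C *m J)
    - (2 * \tr C / n ^+ 2) *: 1%:M - n^-1 *: (mdiag C *m Q) - n^-1 *: (Q *m mdiag C)
    + (2 * \tr C / n ^+ 2) *: Q.
Proof.
apply/matrixP => i j; rewrite /Ldiff /L0op mdiag_mulmx_Jm mdiag_mulmx mulmx_mdiag mdiagE.
rewrite mxE Lop_entry !mxE.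
under [in RHS]eq_bigr => k _ do rewrite mxE.
by field.
Qed.

Lemma mxtrace_Jm : \tr J = 1.
Proof.
rewrite /mxtrace; under eq_bigr => k _ do rewrite mxE.
by rewrite sumr_const card_ord -[_ *+ N]mulr_natr mulVf.
Qed.

Lemma Ldiff_Jm : Ldiff J = 0.
Proof.
rewrite LdiffE mxtrace_Jm mdiag_mulmx_Jm mdiag_mulmx mulmx_mdiag mdiagE.
apply/matrixP => i j; rewrite !mxE.
under eq_bigr => k _ do rewrite !mxE.
by rewrite -mulr_suml Q_row1; field.
Qed.

Lemma mulmx_Jm : Q *m J = J.
Proof.
apply/matrixP => i j; rewrite !mxE.
under eq_bigr => k _ do rewrite mxE.
by rewrite -mulr_suml Q_row1 mul1r.
Qed.

Lemma Jm_mulmx : J *m Q = J.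
Proof.
apply/matrixP => i j; rewrite !mxE.
under eq_bigr => k _ do rewrite mxE Q_sym.
by rewrite -mulr_sumr Q_row1 mulr1.
Qed.

Lemma L0op_comm (C : 'M[R]_N) : comm_mx Q C ->
  L0op Q C = ((n - 2) / n) *: C + (2 / n) *: (Q *m C) + (2 * \tr C / n ^+ 2) *: (1%:M - Q).
Proof. by rewrite /L0op => <-; apply/matrixP => i j; rewrite !mxE; ring. Qed.

Lemma alpha_eq0 k s : (k < s)%N -> alpha Q k s = 0.
Proof.
elim: k s => [|k IH] [|[|s]] //= lt_ks.
by rewrite !IH ?mulr0 ?addr0 //; lia.
Qed.

Definition alpha_mx k := \sum_(s < k.+1) alpha Q k s *: Q ^+ s.

Lemma mxtrace_alpha_mx k :
  \tr (alpha_mx k) = n * alpha Q k 0 + \sum_(1 <= s < k.+1) alpha Q k s * \tr (Q ^+ s).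
Proof.
rewrite /alpha_mx raddf_sum big_ord_recl /= expr0 mxtraceZ mxtrace1 mulrC big_add1 big_mkord.
by congr (_ + _); apply: eq_bigr => s _; rewrite mxtraceZ.
Qed.

Lemma alphaS k s :
  alpha Q k.+1 s = (n - 2) / n * alpha Q k s
    + 2 / n * (if s is s'.+1 then alpha Q k s' else 0)
    + 2 * (1 + \tr (alpha_mx k)) / n ^+ 2 * ((s == 0)%:R - (s == 1)%:R).
Proof. by rewrite mxtrace_alpha_mx; case: s => [|[|s]] /=; field. Qed.

Lemma alpha_mxS k :
  alpha_mx k.+1 = ((n - 2) / n) *: alpha_mx k + (2 / n) *: (Q *m alpha_mx k)
    + (2 * (1 + \tr (alpha_mx k)) / n ^+ 2) *: (1%:M - Q).
Proof.
rewrite {1}/alpha_mx; under eq_bigr => s _ do rewrite alphaS !scalerDl -!(scalerA _ _ (Q ^+ s)).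
rewrite !big_split /= -!scaler_sumr.
congr (_ *: _ + _ *: _ + _ *: _).
- rewrite /alpha_mx (@sumr_ord_vanish _ (fun s => alpha Q k s *: Q ^+ s) k.+1) //.
  by move=> s lt_ks; rewrite alpha_eq0 ?scale0r.
- rewrite big_ord_recl /= scale0r add0r /alpha_mx mulmx_sumr.
  by apply: eq_bigr => s _; rewrite -scalemxAr mulmxE -exprS.
- rewrite !big_ord_recl big1 ?addr0 /=; last by move=> s _; rewrite subrr scale0r.
  by rewrite subr0 sub0r scale1r expr0 expr1 scaleN1r.
Qed.

Lemma iter_L0op_Jm k : iter k (L0op Q) J = J + alpha_mx k.
Proof.
elim: k => [|k IH]; first by rewrite /alpha_mx big_ord1 scale0r addr0.
have commQ : comm_mx Q (J + alpha_mx k).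
  apply: comm_mxD; first by rewrite /comm_mx mulmx_Jm Jm_mulmx.
  apply: comm_mx_sum => s _.
  by rewrite /comm_mx -scalemxAl -scalemxAr !mulmxE -exprS -exprSr.
rewrite iterS IH L0op_comm // alpha_mxS mxtraceD mxtrace_Jm mulmxDr mulmx_Jm.
by apply/matrixP => i j; rewrite !mxE; field.
Qed.

End MarkovOperators.

Theorem lemma4p7 (R : numClosedFieldType) (N : nat) (Q : 'M[R]_N) :
  (8 < N)%N ->
  stochastic Q ->
  irreducible_mx Q ->
  (forall x y, Q x y = Q y x) ->
  \tr Q = 0 ->
  (forall n : nat,
     iter n (Lop Q) (Jm R N) - iter n (L0op Q) (Jm R N)
     = \sum_(j < n) iter j (Lop Q) (etan Q (n - j)%N)) /\
  (forall n M : nat, (0 < n)%N -> (n <= M)%N ->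
     etan Q n
     = \sum_(s < M) alpha Q n.-1 s *:
         ((N%:R)^-1 *: mdiag (Q ^+ s)
          + mdiag (Q *m mdiag (Q ^+ s) *m Jm R N)
          - (2 * \tr (Q ^+ s) / N%:R ^+ 2) *: 1%:M
          - (N%:R)^-1 *: (mdiag (Q ^+ s) *m Q)
          - (N%:R)^-1 *: (Q *m mdiag (Q ^+ s))
          + (2 * \tr (Q ^+ s) / N%:R ^+ 2) *: Q)).
Proof.
move=> ltN8 [_ Q_row1] _ Q_sym _.
have N_neq0 : N%:R != 0 :> R by rewrite pnatr_eq0 gtn_eqF // (ltn_trans _ ltN8).
split=> [n | [|k] M // _ leM]; first exact: iter_subr_telescope.
have -> : etan Q k.+1 = Ldiff Q (iter k (L0op Q) (Jm R N)) by [].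
rewrite iter_L0op_Jm // linearD /= Ldiff_Jm // add0r linear_sum /=.
rewrite -(@sumr_ord_vanish _ (fun s => Ldiff Q (alpha Q k s *: Q ^+ s)) k.+1 M) //.
  by apply: eq_bigr => s _; rewrite linearZ /= LdiffE.
by move=> s lt_ks; rewrite alpha_eq0 // scale0r linear0.
Qed.
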